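(* For every graph $G$, $\rho_{\widehat{T}}(G)=\Theta(G)$.
   Context: Graphs are finite and simple. A graph $G=(V,E)$ is a threshold graph if there exist real weights $w:V\to\mathbb{R}$ and a real number $s$ such that for all distinct $i,j\in V$: $w(i)+w(j)\ge s$ if and only if $ij\in E$. The threshold dimension $\Theta(G)$ of $G=(V,E)$ is the least $k\ge 1$ such that there exist threshold graphs $(V,E_1),\dots,(V,E_k)$ with each $E_i\subseteq E$ and $E_1\cup\dots\cup E_k=E$. For $u,v\in(\mathbb{R}\cup\{-\infty\})^k$ the max-plus tropical dot product is $u\,\widehat{\odot}\,v=\max_i(u_i+v_i)$. A max-plus $k$-tropical dot product representation of $G$ is a map $f:V\to(\mathbb{R}\cup\{-\infty\})^k$ with a threshold $t>0$ such that for all distinct $x,y\in V$: $xy\in E$ iff $f(x)\,\widehat{\odot}\,f(y)\ge t$. $\rho_{\widehat T}(G)$ is the least $k\ge 1$ for which such a representation exists. *)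

From HB Require Import structures.
From mathcomp Require Import all_boot all_order all_algebra.
From mathcomp Require Import boolp reals constructive_ereal ereal Rstruct.

Set Implicit Arguments.
Unset Strict Implicit.
Unset Printing Implicit Defensive.

Import Order.TTheory GRing.Theory Num.Theory.
Local Open Scope ring_scope.

Notation RR := Rdefinitions.R.

(* A finite simple graph: vertex set a finType T, edge relation e symmetric
   and irreflexive (these are hypotheses of the theorem). *)

Definition threshold_graph (T : finType) (E : rel T) : Prop :=
  exists (w : T -> RR) (s : RR),
    forall i j : T, i != j -> ((s <= w i + w j) <-> E i j).

Definition threshold_cover (T : finType) (e : rel T) (k : nat) : Prop :=
  exists Es : 'I_k -> rel T,
    (forall i, symmetric (Es i) /\ irreflexive (Es i)) /\
    (forall i, threshold_graph (Es i)) /\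
    (forall i x y, Es i x y -> e x y) /\
    (forall x y, e x y -> exists i, Es i x y).

Definition tdot (k : nat) (u v : 'I_k -> \bar RR) : \bar RR :=
  \big[Order.max/-oo%E]_(i < k) (u i + v i)%E.

Definition tropical_rep (T : finType) (e : rel T) (k : nat) : Prop :=
  exists (f : T -> 'I_k -> \bar RR) (t : RR),
    (forall x i, f x i != +oo%E) /\ 0 < t /\
    forall x y : T, x != y -> (e x y <-> (t%:E <= tdot (f x) (f y))%E).

Definition least_pos (P : nat -> Prop) (n : nat) : Prop :=
  (1 <= n)%N /\ P n /\ forall m, (1 <= m)%N -> P m -> (n <= m)%N.

Definition threshold_dim_is (T : finType) (e : rel T) (n : nat) : Prop :=
  least_pos (threshold_cover e) n.

Definition tropical_dim_is (T : finType) (e : rel T) (n : nat) : Prop :=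
  least_pos (tropical_rep e) n.

(* Each coordinate [i] of a max-plus representation [f] with threshold [t]
   defines the threshold graph [t <= f x i + f y i], and [G] is the union of
   these coordinate graphs since the tropical dot product is a maximum.
   Conversely, the weights of threshold graphs normalised to threshold [1]
   are the coordinates of a representation of their union.  So a threshold
   cover of size [k] exists iff a [k]-representation does, and both exist
   for some [k >= 1] because the stars of the vertices cover [G]. *)

From mathcomp Require Import all_boot.
From HB Require Import structures.
From mathcomp Require Import all_order all_algebra.
From mathcomp Require Import boolp reals constructive_ereal ereal Rstruct.
From mathcomp Require Import lra.

Set Implicit Arguments.
Unset Strict Implicit.
Unset Printing Implicit Defensive.

Import Order.TTheory GRing.Theory Num.Theory.
Local Open Scope ring_scope.

Lemma tdot_geP k (u v : 'I_k -> \bar RR) (t : RR) :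
  (t%:E <= tdot u v)%E <-> exists i, (t%:E <= u i + v i)%E.
Proof.
split=> [tle|[i tle]]; last exact: (bigmax_sup i).
apply: contrapT => /forallNP tgt.
have : (tdot u v < t%:E)%E.
  apply/bigmax_ltP; split => [|i _]; first exact: ltNyr.
  by rewrite ltNge; apply/negP => /tgt.
by rewrite ltNge tle.
Qed.

Lemma least_pos_exists (P : nat -> Prop) :
  (exists m, (1 <= m)%N /\ P m) -> exists n, least_pos P n.
Proof.
move=> [m Pm]; have exP : exists m, `[< (1 <= m)%N /\ P m >].
  by exists m; apply/asboolP.
case: (ex_minnP exP) => n /asboolP [n_gt0 Pn] n_min.
by exists n; do 2!split => //; move=> p p_gt0 Pp; apply/n_min/asboolP.
Qed.

Lemma least_pos_iff (P Q : nat -> Prop) n :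
  (forall k, P k <-> Q k) -> least_pos P n -> least_pos Q n.
Proof.
move=> PQ [n_gt0 [Pn n_min]]; do 2!split => //; first exact/PQ.
by move=> m m_gt0 /PQ; apply: n_min.
Qed.

Section ThresholdGraphs.
Variable T : finType.

Lemma threshold_graph_normalize (E : rel T) :
  threshold_graph E ->
  exists w : T -> RR, forall a b, a != b -> (1 <= w a + w b <-> E a b).
Proof.
move=> [w [s wE]]; exists (fun a => w a - s / 2 + 1 / 2) => a b ab.
by rewrite -(wE a b ab); split => ?; lra.
Qed.

Lemma threshold_graph0 : threshold_graph (fun _ _ : T => false).
Proof. by exists (fun=> 0), 1 => a b _; split => //; lra. Qed.

Definition star (e : rel T) (c : T) : rel T :=
  [rel a b | e a b && ((a == c) || (b == c))].

(* The center weighs [1], its neighbours [0] and all other vertices [-2]. *)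
Lemma threshold_graph_star (e : rel T) c :
  symmetric e -> irreflexive e -> threshold_graph (star e c).
Proof.
move=> e_sym e_irr.
exists (fun a => if a == c then 1 else if e c a then 0 else -2), 1 => a b ab /=.
have [ac|ac] := eqVneq a c; first subst a.
  rewrite /star /= eqxx [b == c]eq_sym (negbTE ab) andbT.
  by case: (e c b); split => //; lra.
have [bc|bc] := eqVneq b c; first subst b.
  rewrite /star /= eqxx (negbTE ac) orbT andbT [e a c]e_sym.
  by case: (e c a); split => //; lra.
rewrite /star /= (negbTE ac) (negbTE bc) andbF.
by case: (e c a); case: (e c b); split => //; lra.
Qed.

(* A [-oo] entry gets a weight too negative to reach [t] with any entry. *)
Lemma threshold_graph_coordinate (u : T -> \bar RR) (t : RR) :
  (forall z, u z != +oo%E) ->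
  threshold_graph [rel a b | (a != b) && (t%:E <= u a + u b)%E].
Proof.
move=> u_fin; pose S : RR := \sum_(z : T) `|fine (u z)|.
pose w z : RR := if u z == -oo%E then - (S + `|t| + 1) else fine (u z).
have S_ge0 : 0 <= S by apply: sumr_ge0 => z _; exact: normr_ge0.
have fine_leS z : fine (u z) <= S.
  apply: le_trans (ler_norm _) _.
  by rewrite /S (bigD1 z) //= lerDl; apply: sumr_ge0 => ? _; exact: normr_ge0.
have t_bound : - `|t| <= t by rewrite lerNl -normrN ler_norm.
have t_abs : 0 <= `|t| := normr_ge0 t.
have u_cases z : u z = (fine (u z))%:E \/ u z = -oo%E.
  by move: (u_fin z); case: (u z) => [r| |] //= _; [left|right].
exists w, t => a b ab; rewrite /= ab /w.
have := fine_leS a; have := fine_leS b.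
case: (u_cases a) => ->; case: (u_cases b) => -> /=.
- by rewrite -EFinD lee_fin.
- by rewrite addeNy leeNy_eq; split => //; lra.
- by rewrite addNye leeNy_eq; split => //; lra.
- by rewrite addeNy leeNy_eq; split => //; lra.
Qed.

End ThresholdGraphs.

Section ThresholdDimension.
Variables (T : finType) (e : rel T).
Hypotheses (e_sym : symmetric e) (e_irr : irreflexive e).

Lemma threshold_cover_leq k m :
  (k <= m)%N -> threshold_cover e k -> threshold_cover e m.
Proof.
move=> km [Es [Es_simple [Es_thr [Es_sub Es_cov]]]].
pose Es' (i : 'I_m) : rel T :=
  if insub (val i) is Some j then Es j else fun _ _ => false.
exists Es'; split; [|split; [|split]] => [i|i|i x y|x y exy].
- by rewrite /Es'; case: insub => [j|//]; exact: Es_simple.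
- by rewrite /Es'; case: insub => [j|]; [exact: Es_thr | exact: threshold_graph0].
- by rewrite /Es'; case: insub => [j|//]; exact: Es_sub.
- have [j Ej] := Es_cov x y exy.
  exists (widen_ord km j); rewrite /Es' /= valK; exact: Ej.
Qed.

Lemma threshold_cover_stars : threshold_cover e #|T|.
Proof.
exists (fun i => star e (enum_val i)); split; [|split; [|split]].
- move=> i; split => [a b|a]; last by rewrite /star /= e_irr.
  by rewrite /star /= e_sym orbC.
- by move=> i; exact: threshold_graph_star.
- by move=> i x y /andP[].
- move=> x y exy; exists (enum_rank x).
  by rewrite /star /= enum_rankK exy eqxx.
Qed.

Lemma tropical_rep_of_cover k : threshold_cover e k -> tropical_rep e k.
Proof.
case=> Es [_ [Es_thr [Es_sub Es_cov]]].
have [w wE] := choice (fun i => threshold_graph_normalize (Es_thr i)).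
exists (fun x i => (w i x)%:E), 1; split => //; split => // x y xy.
rewrite tdot_geP; split => [/Es_cov [i Ei]|[i]].
  by exists i; rewrite -EFinD lee_fin; apply/(wE i x y xy).
by rewrite -EFinD lee_fin => /(wE i x y xy) /Es_sub.
Qed.

Lemma cover_of_tropical_rep k : tropical_rep e k -> threshold_cover e k.
Proof.
case=> f [t [f_fin [_ f_rep]]].
exists (fun i => [rel a b | (a != b) && (t%:E <= f a i + f b i)%E]).
split; [|split; [|split]].
- move=> i; split => [a b|a]; last by rewrite /= eqxx.
  by rewrite /= eq_sym addeC.
- move=> i; apply: threshold_graph_coordinate => z; exact: f_fin.
- move=> i x y /andP[xy fxy]; apply/(f_rep x y xy)/tdot_geP; by exists i.
- move=> x y exy; have xy : x != y by apply: contraTneq exy => ->; rewrite e_irr.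
  have [i fxy] := (tdot_geP _ _ _).1 ((f_rep x y xy).1 exy).
  by exists i; rewrite /= xy.
Qed.

End ThresholdDimension.

Theorem mainTheorem6 (T : finType) (e : rel T)
    (e_sym : symmetric e) (e_irr : irreflexive e) :
  exists n : nat, threshold_dim_is e n /\ tropical_dim_is e n.
Proof.
have [n n_least] : exists n, threshold_dim_is e n.
  apply: least_pos_exists; exists #|T|.+1; split; first by [].
  exact: threshold_cover_leq (leqnSn _) (threshold_cover_stars e_sym e_irr).
exists n; split; first exact: n_least.
apply: least_pos_iff n_least => k; split.
- exact: tropical_rep_of_cover.
- exact: cover_of_tropical_rep.
Qed.
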